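(* For $\zeta\in[a,\tau)$ define $$D(\zeta)=\left[\frac{1}{\epsilon}\Lambda\left(e^{\epsilon(\omega-\tau)}-1\right)-\frac{1-\tau_2}{\epsilon-\widetilde{\epsilon}}\,\frac{1-e^{-r(\omega-\tau)}}{ra_\tau}\left(1-e^{(\widetilde{\epsilon}-\epsilon)(\tau-\zeta)}\right)\right]e^{\epsilon(\tau-\zeta)}$$ (this is $\widetilde{M_1}(\zeta)-\widetilde{M_2}(\zeta)$), and let $$\Lambda_{EP}=\frac{\epsilon(1-\tau_2)\left(1-e^{-r(\omega-\tau)}\right)\left(e^{(\widetilde{\epsilon}-\epsilon)(\tau-a)}-1\right)}{ra_\tau\left(e^{\epsilon(\omega-\tau)}-1\right)(\widetilde{\epsilon}-\epsilon)}.$$ If $\Lambda\le\Lambda_{EP}$, then there exists a critical age $\widetilde{\zeta}\in[a,\tau)$ such that $D(\zeta)<0$ for $a\le\zeta<\widetilde{\zeta}$, $D(\widetilde{\zeta})=0$, and $D(\zeta)>0$ for $\widetilde{\zeta}<\zeta<\tau$ (younger participants prefer EET to PAYGO, older ones prefer PAYGO, age $\widetilde\zeta$ is indifferent). If $\Lambda>\Lambda_{EP}$, then $D(\zeta)>0$ for all $\zeta\in[a,\tau)$ (all these participants prefer PAYGO to EET).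
   Context: Parameters: $r>0$, $\mu>r$, $\sigma>0$, real $\gamma,\xi,\alpha,\beta$; $\nu=(\mu-r)/\sigma$, $\epsilon=\gamma-r-\xi\nu\neq0$, $\widetilde{\epsilon}=\alpha-r-\beta\nu\neq\epsilon$. Ages $a<\tau<\omega$; post-retirement tax rate $\tau_2\in[0,1)$. With survival function $s(x)=e^{-A_m(x-a)-\frac{B_m}{\ln c}(c^x-c^a)}$ (Makeham constants $A_m,B_m,c$) and population growth rate $\rho$: $\Lambda=\frac{\int_a^\tau e^{-(\rho+A_m)(u-a)-\frac{B_m}{\ln c}(c^u-c^a)}du}{\int_\tau^\omega e^{-(\rho+A_m)(u-a)-\frac{B_m}{\ln c}(c^u-c^a)}du}>0$, and $a_\tau=\int_0^\infty e^{-(r+A_m)t-\frac{B_m}{\ln c}c^\tau(c^t-1)}dt\in(0,\infty)$ (annuity factor). Interpretation: $\zeta$ is a participant's age at the decision time, and the sign of $D(\zeta)$ determines whether that participant's utility gains more from the PAYGO contribution rate ($D>0$) or the EET contribution rate ($D<0$). *)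

From Stdlib Require Import Reals Lra.
From Coquelicot Require Import Coquelicot.
Open Scope R_scope.

Definition nu_of (r mu sigma : R) : R := (mu - r) / sigma.
Definition eps_of (r mu sigma gamma xi : R) : R := gamma - r - xi * nu_of r mu sigma.
Definition epst_of (r mu sigma alpha beta : R) : R := alpha - r - beta * nu_of r mu sigma.

Definition lam_integrand (rho Am Bm c a u : R) : R :=
  exp (- (rho + Am) * (u - a) - Bm / ln c * (Rpower c u - Rpower c a)).

Definition Lambda_of (rho Am Bm c a tau omega : R) : R :=
  RInt (lam_integrand rho Am Bm c a) a tau / RInt (lam_integrand rho Am Bm c a) tau omega.

Definition annuity_integrand (r Am Bm c tau t : R) : R :=
  exp (- (r + Am) * t - Bm / ln c * Rpower c tau * (Rpower c t - 1)).

Definition Dfun (eps epst r tau2 Lam atau a tau omega zeta : R) : R :=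
  (1 / eps * Lam * (exp (eps * (omega - tau)) - 1)
   - (1 - tau2) / (eps - epst) * ((1 - exp (- r * (omega - tau))) / (r * atau))
     * (1 - exp ((epst - eps) * (tau - zeta))))
  * exp (eps * (tau - zeta)).

Definition Lambda_EP (eps epst r tau2 atau a tau omega : R) : R :=
  eps * (1 - tau2) * (1 - exp (- r * (omega - tau))) * (exp ((epst - eps) * (tau - a)) - 1)
  / (r * atau * (exp (eps * (omega - tau)) - 1) * (epst - eps)).

(** [Dfun] factors as [Dcore z * exp (eps * (tau - z))], where
    [Dcore z = Lam * g eps (omega - tau) - K * g (epst - eps) (tau - z)] with
    [g d s = (exp (d * s) - 1) / d] and
    [K = (1 - tau2) * (1 - exp (- r * (omega - tau))) / (r * atau) > 0].
    For every [d <> 0], [g d] is strictly increasing and positive on [s > 0],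
    so [Dcore] is strictly increasing, positive at [tau], and
    [Dcore a = (Lam - Lambda_EP) * g eps (omega - tau)] has the sign of
    [Lam - Lambda_EP]; the intermediate value theorem then gives the critical
    age. *)
From Stdlib Require Import Reals Lra.
From Coquelicot Require Import Coquelicot.
Open Scope R_scope.

Definition expm1_div (d s : R) : R := (exp (d * s) - 1) / d.

Lemma expm1_div_pos (d s : R) : d <> 0 -> 0 < s -> 0 < expm1_div d s.
Proof.
  intros hd hs; unfold expm1_div.
  destruct (Rlt_or_le 0 d) as [hd0 | hd0].
  - assert (1 < exp (d * s)) by (rewrite <- exp_0; apply exp_increasing; nra).
    apply Rdiv_lt_0_compat; lra.
  - assert (exp (d * s) < 1) by (rewrite <- exp_0; apply exp_increasing; nra).
    assert (/ d < 0) by (apply Rinv_lt_0_compat; lra).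
    unfold Rdiv; nra.
Qed.

Lemma expm1_div_0 (d : R) : d <> 0 -> expm1_div d 0 = 0.
Proof. intro hd; unfold expm1_div; rewrite Rmult_0_r, exp_0; field; exact hd. Qed.

Lemma expm1_div_increasing (d : R) : d <> 0 -> strict_increasing (expm1_div d).
Proof.
  intros hd s1 s2 hs.
  assert (hsplit : expm1_div d s2 - expm1_div d s1
                   = exp (d * s1) * expm1_div d (s2 - s1)).
  { unfold expm1_div.
    replace (d * s2) with (d * s1 + d * (s2 - s1)) by ring.
    rewrite exp_plus; field; exact hd. }
  assert (0 < exp (d * s1) * expm1_div d (s2 - s1)).
  { apply Rmult_lt_0_compat; [apply exp_pos | apply expm1_div_pos; lra]. }
  lra.
Qed.

Definition sign_change_at (f : R -> R) (a b zt : R) : Prop :=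
  a <= zt < b /\
  (forall z, a <= z < zt -> f z < 0) /\
  f zt = 0 /\
  (forall z, zt < z < b -> 0 < f z).

Lemma increasing_sign_change (f : R -> R) (a b : R) :
  a < b -> continuity f -> strict_increasing f -> f a <= 0 -> 0 < f b ->
  exists zt, sign_change_at f a b zt.
Proof.
  intros hab hf hinc hfa hfb.
  assert (hroot : exists zt, a <= zt < b /\ f zt = 0).
  { destruct (Req_dec (f a) 0) as [h0 | h0].
    - exists a; split; [lra | exact h0].
    - destruct (IVT f a b hf hab ltac:(lra) hfb) as [zt [hzt hfzt]].
      exists zt; repeat split; try lra.
      destruct (Req_dec zt b) as [-> | hne]; lra. }
  destruct hroot as [zt [hzt hfzt]].
  exists zt; repeat split; try lra;
    intros z hz; rewrite <- hfzt; apply hinc; lra.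
Qed.

Lemma sign_change_at_mul_pos (f w g : R -> R) (a b zt : R) :
  (forall z, 0 < w z) -> (forall z, g z = f z * w z) ->
  sign_change_at f a b zt -> sign_change_at g a b zt.
Proof.
  intros hw hg [hzt [hneg [hzero hpos]]].
  repeat split; try lra.
  - intros z hz; rewrite hg; specialize (hneg z hz); specialize (hw z); nra.
  - rewrite hg, hzero; ring.
  - intros z hz; rewrite hg; apply Rmult_lt_0_compat; auto.
Qed.

Section Utility_difference.

Variables (eps epst r tau2 Lam atau a tau omega : R).
Hypotheses (heps : eps <> 0) (hepst : epst <> eps).
Hypotheses (hr : 0 < r) (hatau : 0 < atau) (htw : tau < omega) (htau2 : tau2 < 1).

Let K : R := (1 - tau2) * (1 - exp (- r * (omega - tau))) / (r * atau).

Definition Dcore (z : R) : R :=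
  Lam * expm1_div eps (omega - tau) - K * expm1_div (epst - eps) (tau - z).

Lemma K_pos : 0 < K.
Proof.
  assert (exp (- r * (omega - tau)) < 1) by (rewrite <- exp_0; apply exp_increasing; nra).
  apply Rdiv_lt_0_compat; nra.
Qed.

Lemma Dfun_factor (z : R) :
  Dfun eps epst r tau2 Lam atau a tau omega z = Dcore z * exp (eps * (tau - z)).
Proof. unfold Dfun, Dcore, K, expm1_div; field; repeat split; lra. Qed.

Lemma Dcore_continuous : continuity Dcore.
Proof. unfold Dcore, expm1_div; reg. Qed.

Lemma Dcore_increasing : strict_increasing Dcore.
Proof.
  intros z1 z2 hz; unfold Dcore.
  assert (hepst' : epst - eps <> 0) by lra.
  pose proof (expm1_div_increasing _ hepst' (tau - z2) (tau - z1) ltac:(lra)).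
  pose proof K_pos; nra.
Qed.

Lemma Dcore_tau : Dcore tau = Lam * expm1_div eps (omega - tau).
Proof. unfold Dcore; rewrite Rminus_diag, expm1_div_0 by lra; ring. Qed.

Lemma Dcore_a :
  Dcore a = (Lam - Lambda_EP eps epst r tau2 atau a tau omega) * expm1_div eps (omega - tau).
Proof.
  assert (hE : exp (eps * (omega - tau)) - 1 <> 0).
  { intro hE; pose proof (expm1_div_pos eps (omega - tau) heps ltac:(lra)) as hpos.
    unfold expm1_div in hpos; rewrite hE in hpos; lra. }
  unfold Dcore, Lambda_EP, K, expm1_div; field; repeat split; lra.
Qed.

End Utility_difference.

Theorem theorem3p2
  (r mu sigma gamma xi alpha beta : R)
  (a tau omega tau2 : R)
  (Am Bm c rho atau : R)
  (hr : 0 < r) (hmu : r < mu) (hsigma : 0 < sigma)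
  (heps : eps_of r mu sigma gamma xi <> 0)
  (hepst : epst_of r mu sigma alpha beta <> eps_of r mu sigma gamma xi)
  (hat : a < tau) (htw : tau < omega)
  (htau2 : 0 <= tau2 < 1)
  (hc : 0 < c) (hc1 : c <> 1)
  (hLam : 0 < Lambda_of rho Am Bm c a tau omega)
  (hatau_int : is_RInt_gen (annuity_integrand r Am Bm c tau)
                 (at_point 0) (Rbar_locally p_infty) atau)
  (hatau : 0 < atau) :
  let eps := eps_of r mu sigma gamma xi in
  let epst := epst_of r mu sigma alpha beta in
  let Lam := Lambda_of rho Am Bm c a tau omega in
  let D := Dfun eps epst r tau2 Lam atau a tau omega in
  (Lam <= Lambda_EP eps epst r tau2 atau a tau omega ->
     exists zt, a <= zt < tau /\
       (forall z, a <= z < zt -> D z < 0) /\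
       D zt = 0 /\
       (forall z, zt < z < tau -> 0 < D z)) /\
  (Lambda_EP eps epst r tau2 atau a tau omega < Lam ->
     forall z, a <= z < tau -> 0 < D z).
Proof.
  intros eps epst Lam D.
  change (0 < Lam) in hLam.
  assert (hE : 0 < expm1_div eps (omega - tau)) by (apply expm1_div_pos; [exact heps | lra]).
  assert (hD : forall z, D z = Dcore eps epst r tau2 Lam atau tau omega z * exp (eps * (tau - z)))
    by (intro z; apply Dfun_factor; assumption).
  assert (hinc := Dcore_increasing eps epst r tau2 Lam atau tau omega hepst hr hatau htw
                    ltac:(lra)).
  assert (hDa := Dcore_a eps epst r tau2 Lam atau a tau omega heps hepst hr hatau htw).
  split.
  - intro hle.
    destruct (increasing_sign_change _ a tau hat (Dcore_continuous _ _ _ _ _ _ _ _) hinc)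
      as [zt hzt].
    + rewrite hDa; nra.
    + rewrite Dcore_tau by exact hepst; nra.
    + exists zt; exact (sign_change_at_mul_pos _ _ D a tau zt (fun z => exp_pos _) hD hzt).
  - intros hlt z hz; rewrite hD.
    apply Rmult_lt_0_compat; [| apply exp_pos].
    destruct (Req_dec z a) as [-> | hza]; [rewrite hDa; nra |].
    pose proof (hinc a z ltac:(lra)); rewrite hDa in *; nra.
Qed.
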